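(* Let $d\geq 2$, $\varepsilon=\cos(2\pi/d)+i\sin(2\pi/d)$, and let $\mathbb{C}\langle Y_d\rangle=\mathbb{C}\langle y_0,\ldots,y_{d-1}\rangle$ be the free associative unital algebra, on which the cyclic group $C_d=\langle\rho\rangle$ acts by algebra automorphisms with $\rho(y_k)=\varepsilon^k y_k$, $k=0,\ldots,d-1$ (equivalently, $y_k=x_1+\varepsilon^{-k}x_2+\cdots+\varepsilon^{-k(d-1)}x_d$ and $\rho$ cyclically shifts $x_1\mapsto x_2\mapsto\cdots\mapsto x_d\mapsto x_1$). Let $U=\{u_0=y_0,u_1,\ldots,u_k\}$, where $u_1,\ldots,u_k$ are all commutative monomials $u=y_1^{n_1}\cdots y_{d-1}^{n_{d-1}}$ in $\mathbb{C}[y_0,\ldots,y_{d-1}]$ such that $1\leq n_1+\cdots+n_{d-1}\leq d$, $n_1+2n_2+\cdots+(d-1)n_{d-1}\equiv 0\pmod d$, and $u$ cannot be presented as a product of two or more monomials of this kind (so $U$ generates the commutative invariant algebra $\mathbb{C}[Y_d]^{C_d}$). Regard each $u_i=y_1^{n_{i,1}}\cdots y_{d-1}^{n_{i,d-1}}$ as the element of $\mathbb{C}\langle Y_d\rangle$ given by the same word. Then $U$ generates the $S$-algebra $(\mathbb{C}\langle Y_d\rangle^{C_d},\circ)$, i.e. the smallest subalgebra of $\mathbb{C}\langle Y_d\rangle$ containing $U$ and closed under the operations $\circ\sigma$ is $\mathbb{C}\langle Y_d\rangle^{C_d}$.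
   Context: The $S$-algebra structure $(\mathbb{C}\langle Y_d\rangle,\circ)$: on the homogeneous component of degree $n$ the symmetric group $\mathrm{Sym}_n$ acts on the right by permuting positions of variables, $(y_{j_1}\cdots y_{j_n})\circ\sigma=y_{j_{\sigma^{-1}(1)}}\cdots y_{j_{\sigma^{-1}(n)}}$, extended linearly. An $S$-subalgebra is a (unital) subalgebra that is a graded subspace whose homogeneous components of each degree $n$ are closed under $\circ\sigma$ for all $\sigma\in\mathrm{Sym}_n$; the $S$-subalgebra generated by a set of homogeneous elements is the smallest such subalgebra containing it. $\mathbb{C}\langle Y_d\rangle^{C_d}=\{f:\rho(f)=f\}$. *)

From Stdlib Require Import Rdefinitions Raxioms Rtrigo_def Rtrigo1.
From HB Require Import structures.
From mathcomp Require Import all_boot all_order all_algebra all_fingroup.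
From mathcomp Require Import complex.
From mathcomp Require Import Rstruct.

Set Implicit Arguments.
Unset Strict Implicit.
Unset Printing Implicit Defensive.

Import GRing.Theory Num.Theory.
Local Open Scope ring_scope.

Definition CC : Type := complex Rdefinitions.R.

Definition eps (d : nat) : CC :=
  Complex (cos (2 * PI / INR d))%R (sin (2 * PI / INR d))%R.

(* Elements of the free associative algebra C<y_0,...,y_{d-1}> are
   represented by their coefficient functions on words (seq 'I_d);
   a genuine (noncommutative) polynomial has finite support. *)
Definition word (d : nat) := seq 'I_d.
Definition series (d : nat) := word d -> CC.

Definition is_poly d (f : series d) : Prop :=
  exists s : seq (word d), forall w, f w != 0 -> w \in s.

Definition mono d (w : word d) : series d := fun v => if v == w then 1 else 0.
Definition pone d : series d := @mono d [::].
Definition padd d (f g : series d) : series d := fun w => f w + g w.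
Definition pscale d (c : CC) (f : series d) : series d := fun w => c * f w.
Definition pmul d (f g : series d) : series d :=
  fun w => \sum_(i < (size w).+1) f (take i w) * g (drop i w).

Definition hom d (n : nat) (f : series d) : series d :=
  fun w => if size w == n then f w else 0.

(* For sigma in Sym_n and a word w' of length n, the word j with
   j_k = w'_{sigma(k)}; then (y_j o sigma) = y_{w'}. *)
Definition permw d n (s : 'S_n) (w : word d) : word d :=
  match w with
  | [::] => [::]
  | a :: _ => [seq nth a w (s i) | i <- enum 'I_n]
  end.

(* right action  (y_{j_1}...y_{j_n}) o sigma = y_{j_{sigma^-1(1)}}...y_{j_{sigma^-1(n)}}
   on the homogeneous component of degree n, extended linearly *)
Definition pact d n (s : 'S_n) (f : series d) : series d :=
  fun w => if size w == n then f (permw s w) else 0.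

Definition rho d (f : series d) : series d :=
  fun w => (eps d) ^+ (sumn [seq val k | k <- w]) * f w.

Definition Cd_invariant d (f : series d) : Prop := is_poly f /\ rho f = f.

Definition S_subalgebra d (P : series d -> Prop) : Prop :=
  (forall f, P f -> is_poly f) /\
  P (@pone d) /\
  (forall f g, P f -> P g -> P (padd f g)) /\
  (forall c f, P f -> P (pscale c f)) /\
  (forall f g, P f -> P g -> P (pmul f g)) /\
  (forall n f, P f -> P (hom n f)) /\
  (forall n (s : 'S_n) f, P f -> P (pact s (hom n f))).

Definition S_generated d (G : series d -> Prop) (f : series d) : Prop :=
  forall P, S_subalgebra P -> (forall g, G g -> P g) -> P f.

(* exponent vectors n : 'I_d -> nat of commutative monomials in y_1..y_{d-1} *)
Definition expo (d : nat) := {ffun 'I_d -> nat}.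

Definition admissible d (n : expo d) : bool :=
  [forall k : 'I_d, (val k == 0%N) ==> (n k == 0%N)] &&
  (1 <= \sum_(k < d) n k <= d)%N &&
  ((\sum_(k < d) (val k * n k)) %% d == 0)%N.

Definition indecomposable d (n : expo d) : Prop :=
  ~ exists s : seq (expo d),
      [/\ (2 <= size s)%N, all (@admissible d) s &
          forall k, n k = \sum_(m <- s) m k].

Definition is_u d (n : expo d) : Prop := admissible n /\ indecomposable n.

Definition expo_word d (n : expo d) : word d :=
  flatten [seq nseq (n k) k | k <- enum 'I_d].

Definition U_set d (g : series d) : Prop :=
  (exists k : 'I_d, val k = 0%N /\ g = mono [:: k]) \/
  (exists n : expo d, is_u n /\ g = mono (expo_word n)).

From Pilot Require Import Defs.
From Stdlib Require Import Reals Lra Classical FunctionalExtensionality.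
From mathcomp Require Import all_boot all_algebra all_fingroup complex Rstruct.

(* Since rho multiplies a word by eps raised to the sum of its letter indices
   (its weight), and eps is a primitive d-th root of unity, the invariants
   are exactly the polynomials supported on words of weight divisible by d;
   these form an S-subalgebra containing U.  Conversely, the action of the
   symmetric groups lets an S-subalgebra permute the letters of a monomial,
   so it suffices to split the letters of every word of weight divisible by
   d into copies of y_0 and of the u_i.  A word without y_0 has a nonempty
   factor of length at most d and weight divisible by d (pigeonhole on the
   prefix weights mod d); its letters form an admissible monomial, which
   contains an indecomposable one; remove it and induct on the length. *)

Set Implicit Arguments.
Unset Strict Implicit.
Unset Printing Implicit Defensive.

Import GRing.Theory Num.Theory.

Section RootOfUnity.
Local Open Scope R_scope.

Lemma eps_exprn d m : (eps d ^+ m)%R =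
  Complex (cos (INR m * (2 * PI / INR d))) (sin (INR m * (2 * PI / INR d))).
Proof.
elim: m => [|m IH]; first by rewrite Rmult_0_l cos_0 sin_0 expr0.
rewrite exprS IH /eps S_INR Rmult_plus_distr_r Rmult_1_l Rplus_comm cos_plus sin_plus.
by congr Complex; rewrite /= -?RmultE -?RplusE -?RminusE; ring.
Qed.

Lemma eps_expr_order d : (0 < d)%N -> (eps d ^+ d = 1)%R.
Proof.
move=> d_gt0; have d_neq0 : INR d <> 0 by apply/not_0_INR/eqP; rewrite -lt0n.
rewrite eps_exprn (_ : INR d * (2 * PI / INR d) = 2 * PI); last by field.
by rewrite cos_2PI sin_2PI.
Qed.

(* [r * 2 PI / d] lies strictly between [0] and [2 PI], where only [PI] has
   sine zero, and its cosine is [-1]. *)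
Lemma eps_expr_neq1 d r : (0 < r < d)%N -> (eps d ^+ r != 1)%R.
Proof.
case/andP=> r_gt0 lt_rd; apply/eqP; rewrite eps_exprn => -[cos_x sin_x].
have d_pos : 0 < INR d by apply/lt_0_INR/ltP/(leq_ltn_trans _ lt_rd).
have r_pos : 0 < INR r by apply/lt_0_INR/ltP.
have lt_rd' : INR r < INR d by apply/lt_INR/ltP.
set x := INR r * (2 * PI / INR d) in cos_x sin_x.
have x_d : x * INR d = 2 * PI * INR r by rewrite /x; field; lra.
have pi_pos := PI_RGT_0.
have x_pos : 0 < x by apply: Rmult_lt_0_compat => //; apply: Rdiv_lt_0_compat; lra.
have x_lt : x < 2 * PI by nra.
have [|[x_pi|]] := sin_eq_O_2PI_0 x (Rlt_le _ _ x_pos) (Rlt_le _ _ x_lt) sin_x; try lra.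
by move: cos_x; rewrite x_pi cos_PI -RealsE; lra.
Qed.

Lemma eps_primitive d : (0 < d)%N -> (d.-primitive_root (eps d))%R.
Proof.
move=> d_gt0; have [m prim_m dvd_md] := prim_order_exists d_gt0 (eps_expr_order d_gt0).
suff eq_md : m = d by move: prim_m; rewrite eq_md.
apply/eqP; rewrite eqn_leq dvdn_leq //= leqNgt; apply/negP => lt_md.
have := @eps_expr_neq1 d m.
by rewrite (prim_order_gt0 prim_m) lt_md prim_expr_order // eqxx => /(_ isT).
Qed.

End RootOfUnity.

(* Pigeonhole on the [d + 1] prefix sums of [take d s] modulo [d]. *)
Lemma zero_sum_mod_factor (T : Type) (f : T -> nat) (d : nat) (s : seq T) :
    0 < d -> d <= size s ->
  exists a u b, [/\ s = a ++ u ++ b, 0 < size u <= d & d %| sumn (map f u)].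
Proof.
move=> d_gt0 le_ds.
pose r (i : 'I_d.+1) : 'I_d := Ordinal (ltn_pmod (sumn (map f (take i s))) d_gt0).
have /injectivePn[i [j neq_ij r_ij]] : ~~ injectiveb r.
  by apply/injectiveP => /leq_card; rewrite !card_ord ltnn.
wlog lt_ij : i j neq_ij r_ij / i < j.
  move=> IH; case: (ltngtP i j) => [|lt_ji|/val_inj eq_ij]; first exact: IH.
    by apply: (IH j i); rewrite // eq_sym.
  by rewrite eq_ij eqxx in neq_ij.
have le_jd : j <= d by rewrite -ltnS.
set u := drop i (take j s).
have take_j : take j s = take i s ++ u.
  by rewrite -{1}(cat_take_drop i (take j s)) take_takel // ltnW.
exists (take i s), u, (drop j s); split.
- by rewrite catA -take_j cat_take_drop.
- rewrite size_drop size_takel ?(leq_trans le_jd) // subn_gt0 lt_ij /=.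
  exact: leq_trans (leq_subr _ _) le_jd.
- have := congr1 val r_ij; rewrite /= take_j map_cat sumn_cat => /eqP.
  by rewrite -[X in X == _ %[mod d]]addn0 eqn_modDl mod0n eq_sym.
Qed.

Section Words.
Variable d : nat.
Implicit Types (u v w : word d) (m n : expo d).

Definition weight w : nat := sumn [seq val k | k <- w].

Lemma weight_cat u v : weight (u ++ v) = weight u + weight v.
Proof. by rewrite /weight map_cat sumn_cat. Qed.

Lemma perm_weight u v : perm_eq u v -> weight u = weight v.
Proof. by move=> puv; apply/perm_sumn/perm_map. Qed.

Lemma perm_count_mem u v : (forall k, count_mem k u = count_mem k v) -> perm_eq u v.
Proof. by move=> count_uv; apply/allP => k _; apply/eqP/count_uv. Qed.

Lemma count_expo_word n k : count_mem k (expo_word n) = n k.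
Proof.
rewrite /expo_word count_flatten -map_comp sumnE big_map big_enum /=.
rewrite (bigD1 k) //= count_nseq /= eqxx mul1n big1 ?addn0 // => j.
by rewrite count_nseq /= eq_sym => /negbTE ->.
Qed.

Lemma size_expo_word n : size (expo_word n) = \sum_(k < d) n k.
Proof.
rewrite /expo_word size_flatten /shape -map_comp sumnE big_map big_enum /=.
by apply: eq_bigr => k _; rewrite size_nseq.
Qed.

Lemma weight_expo_word n : weight (expo_word n) = \sum_(k < d) val k * n k.
Proof.
rewrite /weight /expo_word map_flatten sumn_flatten -2!map_comp sumnE big_map big_enum /=.
by apply: eq_bigr => k _; rewrite map_nseq sumn_nseq.
Qed.

Definition count_vector w : expo d := [ffun k => count_mem k w].

Lemma perm_expo_word_count w : perm_eq (expo_word (count_vector w)) w.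
Proof. by apply: perm_count_mem => k; rewrite count_expo_word ffunE. Qed.

Lemma perm_flatten_expo_word w (s : seq (expo d)) :
    (forall k, count_mem k w = \sum_(m <- s) m k) ->
  perm_eq w (flatten [seq expo_word m | m <- s]).
Proof.
move=> count_w; apply: perm_count_mem => k.
rewrite count_w count_flatten -map_comp sumnE big_map.
by apply: eq_bigr => m _; rewrite /= count_expo_word.
Qed.

Lemma admissible_size_gt0 n : admissible n -> 0 < size (expo_word n).
Proof. by rewrite size_expo_word => /andP[/andP[_ /andP[]]]. Qed.

Lemma admissible_weight n : admissible n -> d %| weight (expo_word n).
Proof. by rewrite weight_expo_word => /andP[_]. Qed.

Lemma admissible_split_is_u n : admissible n ->
  exists m r, is_u m /\ perm_eq (expo_word n) (expo_word m ++ r).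
Proof.
have [N] := ubnP (size (expo_word n)); elim: N n => // N IH n lt_nN adm_n.
have [indec_n | /NNPP[s [s_ge2 adm_s sum_s]]] := classic (indecomposable n).
  by exists n, [::]; rewrite cats0.
case: s s_ge2 adm_s sum_s => [|a [|b t]] //= _ /and3P[adm_a adm_b _] sum_s.
have perm_n : perm_eq (expo_word n) (flatten [seq expo_word m | m <- a :: b :: t]).
  by apply: perm_flatten_expo_word => k; rewrite count_expo_word sum_s.
have [|m [r [u_m perm_a]]] := IH a _ adm_a.
  rewrite -ltnS; apply: leq_trans lt_nN; rewrite ltnS (perm_size perm_n) /= size_cat.
  by rewrite -[X in X < _]addn0 ltn_add2l size_cat addn_gt0 admissible_size_gt0.
exists m, (r ++ flatten [seq expo_word m | m <- b :: t]); split=> //.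
by rewrite catA (perm_trans perm_n) //= perm_cat2r.
Qed.

Hypothesis d_gt0 : 0 < d.
Let y0 : 'I_d := Ordinal d_gt0.

Lemma admissible_count_vector w :
  y0 \notin w -> 0 < size w <= d -> d %| weight w -> admissible (count_vector w).
Proof.
move=> y0_w size_w dvd_w; have perm_w := perm_expo_word_count w.
rewrite /admissible -size_expo_word (perm_size perm_w) size_w andbT.
rewrite -weight_expo_word (perm_weight perm_w) -/(dvdn _ _) dvd_w andbT.
apply/forallP => k; apply/implyP => /eqP k0; rewrite ffunE.
have -> : k = y0 by apply: val_inj.
exact/eqP/count_memPn.
Qed.

Lemma short_zero_weight_factor w : 0 < size w -> d %| weight w ->
  exists a u b, [/\ w = a ++ u ++ b, 0 < size u <= d & d %| weight u].
Proof.
move=> w_gt0 dvd_w; case: (leqP d (size w)) => [le_dw | lt_wd].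
  exact: zero_sum_mod_factor.
by exists [::], w, [::]; rewrite cats0 w_gt0 ltnW.
Qed.

Lemma zero_weight_split_is_u w : y0 \notin w -> 0 < size w -> d %| weight w ->
  exists m r, is_u m /\ perm_eq w (expo_word m ++ r).
Proof.
move=> y0_w w_gt0 dvd_w.
have [a [u [b [def_w size_u dvd_u]]]] := short_zero_weight_factor w_gt0 dvd_w.
have y0_u : y0 \notin u by apply: contra y0_w => y0_u; rewrite def_w !mem_cat y0_u orbT.
have [m [r [u_m perm_u]]] :=
  admissible_split_is_u (admissible_count_vector y0_u size_u dvd_u).
exists m, (r ++ a ++ b); split=> //.
rewrite def_w perm_catCA [in X in perm_eq _ X]catA perm_cat2r; apply: perm_trans perm_u.
by rewrite perm_sym perm_expo_word_count.
Qed.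

Definition generator_word w : Prop :=
  w = [:: y0] \/ exists n, is_u n /\ w = expo_word n.

Lemma perm_flatten_generator_words w : d %| weight w ->
  exists ws, {in ws, forall g, generator_word g} /\ perm_eq w (flatten ws).
Proof.
have [N] := ubnP (size w); elim: N w => // N IH w lt_wN dvd_w.
have [y0_w | y0_nw] := boolP (y0 \in w).
  have perm_w := perm_to_rem y0_w.
  have lt_rem : size (rem y0 w) < N by move: lt_wN; rewrite (perm_size perm_w).
  have dvd_rem : d %| weight (rem y0 w) by rewrite (perm_weight perm_w) in dvd_w.
  have [ws [gen_ws perm_rem]] := IH _ lt_rem dvd_rem.
  exists ([:: y0] :: ws); split; last by rewrite (perm_trans perm_w) //= perm_cons.
  by move=> g /predU1P[-> | /gen_ws]; [left|].
have [w0 | w_gt0] := posnP (size w).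
  by exists [::]; rewrite (size0nil w0).
have [m [r [u_m perm_w]]] := zero_weight_split_is_u y0_nw w_gt0 dvd_w.
have adm_m : admissible m by case: u_m.
have lt_r : size r < N.
  rewrite -ltnS (leq_trans _ lt_wN) // ltnS (perm_size perm_w) size_cat.
  by rewrite -[X in X < _]add0n ltn_add2r admissible_size_gt0.
have dvd_r : d %| weight r.
  by rewrite -(dvdn_addr _ (admissible_weight adm_m)) -weight_cat -(perm_weight perm_w).
have [ws [gen_ws perm_r]] := IH _ lt_r dvd_r.
exists (expo_word m :: ws); split; last by rewrite (perm_trans perm_w) //= perm_cat2l.
by move=> g /predU1P[-> | /gen_ws]; [right; exists m|].
Qed.

End Words.

Local Open Scope ring_scope.

Section Series.
Variable d : nat.
Implicit Types (u v w : word d) (f g : series d).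

Lemma pmul_mono u v : pmul (mono u) (mono v) = mono (u ++ v).
Proof.
apply: functional_extensionality => w; rewrite /pmul /mono.
have [-> | neq_w] := eqVneq w (u ++ v); last first.
  apply: big1 => i _; case: eqP => [take_w | _]; last by rewrite mul0r.
  case: eqP => [drop_w | _]; last by rewrite mulr0.
  by rewrite -take_w -drop_w cat_take_drop eqxx in neq_w.
have lt_u : (size u < (size (u ++ v)).+1)%N by rewrite ltnS size_cat leq_addr.
rewrite (bigD1 (Ordinal lt_u)) //= take_size_cat // drop_size_cat // !eqxx mulr1.
rewrite big1 ?addr0 // => i neq_iu; case: eqP => [take_i | _]; last by rewrite mul0r.
have le_i : (i <= size (u ++ v))%N by rewrite -ltnS ltn_ord.
move/negP: neq_iu; case; apply/eqP/val_inj => /=.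
by move/(congr1 size): take_i; rewrite size_takel.
Qed.

Lemma permw_tuple n (s : 'S_n) (t : n.-tuple 'I_d) :
  permw s t = [tuple tnth t (s i) | i < n].
Proof.
case: n s t => [|n] s t; first by rewrite tuple0 /=; case: (enum 'I_0) (size_enum_ord 0).
by case: t => -[|a w] // size_t; apply: eq_map => i; rewrite (tnth_nth a).
Qed.

Lemma perm_permw n (s : 'S_n) (t : n.-tuple 'I_d) : perm_eq (permw s t) t.
Proof. by rewrite permw_tuple; apply/tuple_permP; exists s. Qed.

Lemma permw_inj n (s : 'S_n) : injective (fun t : n.-tuple 'I_d => permw s t).
Proof.
move=> t t'; rewrite /= !permw_tuple => /val_inj eq_tt'; apply: eq_from_tnth => i.
by have := congr1 (fun x => tnth x (s^-1 i)%g) eq_tt'; rewrite !tnth_mktuple permKV.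
Qed.

Lemma pact_hom_mono n (s : 'S_n) (t : n.-tuple 'I_d) :
  pact s (Defs.hom n (mono (permw s t))) = mono t.
Proof.
apply: functional_extensionality => v; rewrite /pact /Defs.hom /mono.
have [size_v | /negbTE size_v] := boolP (size v == n); last first.
  by case: eqP => // v_t; rewrite v_t size_tuple eqxx in size_v.
pose tv := Tuple size_v; rewrite -[v]/(val tv) (permw_tuple s tv) size_tuple eqxx.
by rewrite -permw_tuple (inj_eq (@permw_inj n s)).
Qed.

Lemma padd_neq0 f g w : padd f g w != 0 -> f w != 0 \/ g w != 0.
Proof. by rewrite /padd; have [->|] := eqVneq (f w) 0; [rewrite add0r; right | left]. Qed.

Lemma pscale_neq0 c f w : pscale c f w != 0 -> f w != 0.
Proof. by rewrite /pscale; apply: contraNneq => ->; rewrite mulr0. Qed.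

Lemma hom_neq0 n f w : Defs.hom n f w != 0 -> f w != 0.
Proof. by rewrite /Defs.hom; case: ifP; rewrite ?eqxx. Qed.

Lemma pmul_neq0 f g w : pmul f g w != 0 ->
  exists i, f (take i w) != 0 /\ g (drop i w) != 0.
Proof.
move=> nz; have /existsP[i /andP[fi gi]] :
    [exists i : 'I_(size w).+1, (f (take i w) != 0) && (g (drop i w) != 0)].
  apply: contraNT nz; rewrite negb_exists => /forallP none; apply/eqP/big1 => i _.
  by have := none i; rewrite negb_and !negbK => /orP[] /eqP ->; rewrite ?mul0r ?mulr0.
by exists i.
Qed.

Lemma pact_neq0 n (s : 'S_n) f w : pact s f w != 0 ->
  f (permw s w) != 0 /\ perm_eq (permw s w) w.
Proof.
rewrite /pact; case: ifP => [size_w | _]; last by rewrite eqxx.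
by split=> //; apply: (perm_permw s (Tuple size_w)).
Qed.

End Series.

Section SubalgebraClosure.
Variables (d : nat) (P : series d -> Prop).
Hypothesis P_S : S_subalgebra P.
Implicit Types (u v w : word d) (f : series d).

Lemma S_subalgebra_mono_cat u v : P (mono u) -> P (mono v) -> P (mono (u ++ v)).
Proof. by have [_ [_ [_ [_ [P_mul _]]]]] := P_S; rewrite -pmul_mono; apply: P_mul. Qed.

Lemma S_subalgebra_mono_flatten ws :
  {in ws, forall w, P (mono w)} -> P (mono (flatten ws)).
Proof.
elim: ws => [_ | w ws IH P_ws] /=; first by have [_ [P_1 _]] := P_S.
apply: S_subalgebra_mono_cat; first exact/P_ws/mem_head.
by apply: IH => u u_ws; apply/P_ws; rewrite inE u_ws orbT.
Qed.

Lemma S_subalgebra_mono_perm u v : perm_eq u v -> P (mono v) -> P (mono u).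
Proof.
have [_ [_ [_ [_ [_ [_ P_act]]]]]] := P_S.
move=> perm_uv; have /tuple_permP[s def_v] : perm_eq v (in_tuple u) by rewrite perm_sym.
by move=> /(P_act _ s); rewrite def_v -permw_tuple pact_hom_mono.
Qed.

Lemma S_subalgebra_poly f : is_poly f -> (forall w, f w != 0 -> P (mono w)) -> P f.
Proof.
have [_ [P_1 [P_add [P_scale _]]]] := P_S.
case=> s; elim: s f => [|a s IH] f supp_f P_f.
  suff -> : f = pscale 0 (@pone d) by apply: P_scale.
  apply: functional_extensionality => w; rewrite /pscale mul0r.
  by apply/eqP/negPn/negP => /supp_f.
have [fa0 | fa_neq0] := eqVneq (f a) 0.
  apply: IH P_f => w fw_neq0; have /predU1P[w_a |//] := supp_f w fw_neq0.
  by rewrite w_a fa0 eqxx in fw_neq0.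
pose g w := if w == a then 0 else f w.
have -> : f = padd (pscale (f a) (mono a)) g.
  apply: functional_extensionality => w; rewrite /padd /pscale /mono /g.
  by case: eqP => [-> | _]; rewrite ?mulr1 ?addr0 ?mulr0 ?add0r.
apply: P_add; first exact/P_scale/P_f.
apply: IH => w; rewrite /g; have [_ | neq_wa] := eqVneq w a; rewrite ?eqxx // => fw_neq0.
  by have /predU1P[w_a |//] := supp_f w fw_neq0; rewrite w_a eqxx in neq_wa.
exact: P_f.
Qed.

End SubalgebraClosure.

Section Invariants.
Variable d : nat.
Hypothesis d_gt0 : (0 < d)%N.
Implicit Types (w : word d) (f g : series d).

Lemma rho_fixed f : rho f = f <-> (forall w, f w != 0 -> (d %| weight w)%N).
Proof.
have eps_d := eps_primitive d_gt0.
split=> [rho_f w fw_neq0 | supp_f].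
  have := congr1 (fun h => h w) rho_f; rewrite /rho -[RHS]mul1r => /(mulIf fw_neq0).
  by rewrite (prim_order_dvd eps_d) => ->.
apply: functional_extensionality => w; rewrite /rho.
have [-> | /supp_f] := eqVneq (f w) 0; first by rewrite mulr0.
by rewrite (prim_order_dvd eps_d) => /eqP->; rewrite mul1r.
Qed.

Definition zero_weight_poly f := is_poly f /\ forall w, f w != 0 -> (d %| weight w)%N.

Lemma zero_weight_mono w : (d %| weight w)%N -> zero_weight_poly (mono w).
Proof.
rewrite /mono => dvd_w; split.
  by exists [:: w] => v; rewrite inE; case: (eqVneq v w) => //; rewrite eqxx.
by move=> v; case: (eqVneq v w) => [-> _ | _] //; rewrite eqxx.
Qed.

Lemma S_subalgebra_zero_weight : S_subalgebra zero_weight_poly.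
Proof.
split; first by move=> f [].
split; first exact: zero_weight_mono.
split.
  move=> f g [[s1 f_s1] f_dvd] [[s2 g_s2] g_dvd]; split.
    by exists (s1 ++ s2) => w /padd_neq0[/f_s1 | /g_s2] w_s; rewrite mem_cat w_s ?orbT.
  by move=> w /padd_neq0[/f_dvd | /g_dvd].
split.
  move=> c f [[s f_s] f_dvd]; split; first by exists s => w /pscale_neq0/f_s.
  by move=> w /pscale_neq0/f_dvd.
split.
  move=> f g [[s1 f_s1] f_dvd] [[s2 g_s2] g_dvd]; split.
    exists [seq x ++ y | x <- s1, y <- s2] => w /pmul_neq0[i [fi gi]].
    by rewrite -(cat_take_drop i w); apply: allpairs_f; [apply: f_s1 | apply: g_s2].
  move=> w /pmul_neq0[i [/f_dvd fi /g_dvd gi]].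
  by rewrite -(cat_take_drop i w) weight_cat dvdn_add.
split.
  move=> n f [[s f_s] f_dvd]; split; first by exists s => w /hom_neq0/f_s.
  by move=> w /hom_neq0/f_dvd.
move=> n s f [[s1 f_s1] f_dvd]; split.
  exists (flatten [seq permutations x | x <- s1]).
  move=> w /pact_neq0[/hom_neq0/f_s1 w_s1 perm_w]; apply/flatten_mapP.
  by exists (permw s w); rewrite // mem_permutations perm_sym.
by move=> w /pact_neq0[/hom_neq0/f_dvd dvd_w perm_w]; rewrite -(perm_weight perm_w).
Qed.

Lemma U_set_zero_weight g : U_set g -> zero_weight_poly g.
Proof.
case=> [[k [k0 ->]] | [n [[adm_n _] ->]]]; apply: zero_weight_mono.
  by rewrite /weight /= k0.
exact: admissible_weight.
Qed.

Lemma S_generated_mono w : (d %| weight w)%N -> S_generated (@U_set d) (mono w).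
Proof.
move=> dvd_w P P_S P_U.
have [ws [gen_ws perm_w]] := perm_flatten_generator_words d_gt0 dvd_w.
apply: (S_subalgebra_mono_perm P_S perm_w); apply: (S_subalgebra_mono_flatten P_S).
move=> g /gen_ws[-> | [n [u_n ->]]]; apply: P_U; first by left; exists (Ordinal d_gt0).
by right; exists n.
Qed.

End Invariants.

Theorem theorem4p1 (d : nat) (hd : (2 <= d)%N) (f : series d) :
  S_generated (@U_set d) f <-> Cd_invariant f.
Proof.
have d_gt0 : (0 < d)%N by exact: ltnW.
split=> [gen_f | [poly_f /(rho_fixed d_gt0) supp_f]].
  have [poly_f supp_f] := gen_f _ (@S_subalgebra_zero_weight d) (@U_set_zero_weight d).
  by split=> //; apply/(rho_fixed d_gt0).
move=> P P_S P_U; apply: (S_subalgebra_poly P_S poly_f) => w /supp_f dvd_w.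
exact: S_generated_mono.
Qed.
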